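(* Let $d\ge 3$ and let $\mathfrak M$ be a model of $\mathsf{SpecRel}_d$. Then for all inertial observers $m,k\in\mathrm{IOb}$ and all events $e_1,e_2\in Ev_m$, $$\mathsf{time}_m(e_1,e_2)^2-\mathsf{dist}_m(e_1,e_2)^2=\mathsf{time}_k(e_1,e_2)^2-\mathsf{dist}_k(e_1,e_2)^2 .$$
   Context: Fix a natural number $d\ge 2$. Models are first-order structures $\mathfrak M=\langle U;\mathrm B,\mathrm{Ob},\mathrm{IOb},\mathrm{Ph},\mathrm Q,+,\cdot,\le,\mathrm W\rangle$, where $\mathrm B,\mathrm{Ob},\mathrm{IOb},\mathrm{Ph},\mathrm Q$ are unary relations (subsets of $U$: bodies, observers, inertial observers, photons, quantities), $+,\cdot$ are binary function symbols, $\le$ a binary relation symbol, and $\mathrm W$ a $(2+d)$-ary relation; $\mathrm W(m,b,\vec p)$ is read ''observer $m$ coordinatizes body $b$ at coordinate point $\vec p\in\mathrm Q^d$''. For $\vec p=\langle p_1,\dots,p_d\rangle\in\mathrm Q^d$ write $p_t:=p_1$ (time component), $\vec p_s:=\langle p_2,\dots,p_d\rangle$ (space component), $|\vec p|:=\sqrt{p_1^2+\dots+p_n^2}$ for $\vec p\in \mathrm Q^n$ (Euclidean length); $\mathrm Q^d$ carries its vector-space operations and $\vec o$ is the origin. Define $ev_m(\vec p):=\{b\in\mathrm B:\mathrm W(m,b,\vec p)\}$, $Cd_m:=\{\vec p\in\mathrm Q^d: ev_m(\vec p)\neq\emptyset\}$, $Ev_m:=\{ev_m(\vec p):\vec p\in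 Cd_m\}$, $Ev:=\bigcup_{m\in\mathrm{Ob}}Ev_m$. $Crd_m(e)$ denotes the unique $\vec p\in Cd_m$ with $ev_m(\vec p)=e$; any statement involving $Crd_m(e)$ (or the notions below built from it) tacitly asserts that such a unique $\vec p$ exists. $\mathsf{time}_m(e_1,e_2):=|Crd_m(e_1)_t-Crd_m(e_2)_t|$, $\mathsf{dist}_m(e_1,e_2):=|Crd_m(e_1)_s-Crd_m(e_2)_s|$, and $e_1\sim_m e_2$ (simultaneous for $m$) iff $Crd_m(e_1)_t=Crd_m(e_2)_t$. $\mathsf{SpecRel}_d$ consists of the axioms: AxFrame: $\mathrm{Ob}\cup\mathrm{Ph}\subseteq\mathrm B$, $\mathrm{IOb}\subseteq\mathrm{Ob}$, $U=\mathrm B\cup\mathrm Q$, $\mathrm B\cap\mathrm Q=\emptyset$, $\mathrm W\subseteq\mathrm{Ob}\times\mathrm B\times\mathrm Q^d$, $+,\cdot$ are binary operations on $\mathrm Q$ and $\le$ is a binary relation on $\mathrm Q$. AxEOF: $\langle\mathrm Q;+,\cdot,\le\rangle$ is a Euclidean ordered field (a linearly ordered field in which every positive element has a square root). AxSelf$^-$: $\forall m\in\mathrm{Ob}\ \forall\vec p\in Cd_m\ (m\in ev_m(\vec p)\iff \vec p_s=\vec o)$. AxPh$_0$: $\forall m\in\mathrm{IOb}\ \forall\vec p,\vec q\in\mathrm Q^d\ (|\vec p_s-\vec q_s|=|p_t-q_t|\iff \mathrm{Ph}\cap ev_m(\vec p)\cap ev_m(\vec q)\neq\emptyset)$. AxEv: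 $\forall m,k\in\mathrm{IOb}\ Ev_m=Ev_k$. AxSimDist: $\forall m,k\in\mathrm{IOb}\ \forall e_1,e_2\in Ev_m\ (e_1\sim_m e_2\wedge e_1\sim_k e_2\Rightarrow \mathsf{dist}_m(e_1,e_2)=\mathsf{dist}_k(e_1,e_2))$. *)

(* Models of SpecRel_d, rendered two-sorted:
   quantities = carrier of a realFieldType R, bodies = a type B. *)
From mathcomp Require Import all_boot all_order all_algebra.
From Stdlib Require Import ClassicalEpsilon.
Set Implicit Arguments. Unset Strict Implicit. Unset Printing Implicit Defensive.
Import Order.TTheory GRing.Theory Num.Theory.
Local Open Scope ring_scope.

Section Geometry.
Variables (R : realFieldType) (d : nat).

(* the non-negative square root (meaningful whenever it exists, e.g. under AxEOF) *)
Definition esqrt (x : R) : R :=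
  epsilon (inhabits 0) (fun y => 0 <= y /\ y * y = x).

(* coordinate points are row vectors in Q^d; index 0 is the time coordinate p_1 *)
Definition tcomp (p : 'rV[R]_d) : R := \sum_(i < d | val i == 0%N) p 0 i.

Definition sdist (p q : 'rV[R]_d) : R :=
  esqrt (\sum_(i < d | val i != 0%N) (p 0 i - q 0 i) ^+ 2).

Definition space_zero (p : 'rV[R]_d) : Prop :=
  forall i : 'I_d, val i != 0%N -> p 0 i = 0.

Definition tdist (p q : 'rV[R]_d) : R := `|tcomp p - tcomp q|.
End Geometry.

Section Model.
Variables (R : realFieldType) (d : nat) (B : Type)
  (Ob IOb Ph : B -> Prop) (W : B -> B -> 'rV[R]_d -> Prop).

Definition ev (m : B) (p : 'rV[R]_d) : B -> Prop := fun b => W m b p.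
Definition Cd (m : B) (p : 'rV[R]_d) : Prop := exists b, W m b p.
Definition InEv (m : B) (e : B -> Prop) : Prop := exists2 p, Cd m p & ev m p = e.

Definition IsCrd (m : B) (e : B -> Prop) (p : 'rV[R]_d) : Prop :=
  [/\ Cd m p, ev m p = e & forall q, Cd m q -> ev m q = e -> q = p].

Definition AxFrame : Prop :=
  (forall m, IOb m -> Ob m) /\ (forall m b p, W m b p -> Ob m).

Definition AxEOF : Prop := forall x : R, 0 < x -> exists y : R, y * y = x.

Definition AxSelf : Prop :=
  forall m, Ob m -> forall p, Cd m p -> (W m m p <-> space_zero p).

Definition AxPh0 : Prop :=
  forall m, IOb m -> forall p q : 'rV[R]_d,
    (sdist p q = tdist p q <-> exists b, [/\ Ph b, W m b p & W m b q]).

Definition AxEv : Prop :=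
  forall m k, IOb m -> IOb k -> forall e, InEv m e <-> InEv k e.

(* the tacit existence/uniqueness of the coordinates is made explicit via IsCrd *)
Definition AxSimDist : Prop :=
  forall m k, IOb m -> IOb k -> forall e1 e2, InEv m e1 -> InEv m e2 ->
  forall p1 p2 q1 q2, IsCrd m e1 p1 -> IsCrd m e2 p2 ->
    IsCrd k e1 q1 -> IsCrd k e2 q2 ->
    tcomp p1 = tcomp p2 -> tcomp q1 = tcomp q2 -> sdist p1 p2 = sdist q1 q2.

Definition SpecRel : Prop :=
  [/\ AxFrame, AxEOF, AxSelf, AxPh0 & (AxEv /\ AxSimDist)].
End Model.

From mathcomp Require Import all_boot all_order all_algebra.
From mathcomp Require Import ring lra.
From Stdlib Require Import ClassicalEpsilon.
Set Implicit Arguments. Unset Strict Implicit. Unset Printing Implicit Defensive.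
Import Order.TTheory GRing.Theory Num.Theory.
Local Open Scope ring_scope.

(* Let [w] send the coordinates an inertial observer [m] gives to an event to those
   given by another inertial observer [k].  By AxPh0 and AxEv, [w] is a
   bijection of Q^d preserving light-like separation in both directions.  For
   d >= 3 the Alexandrov–Zeeman argument applies: light-like parallelograms are
   recognisable from light-like separation alone, so [w] preserves them, and
   hence [v |-> w v - w 0] is additive.  An additive bijection preserving null
   vectors maps the standard basis to a Minkowski-orthogonal one scaled by a
   constant [c], and acts on coordinates through a field endomorphism [sigma],
   so that [minkq (w p - w q) = c * sigma (minkq (p - q))].  AxSimDist, applied
   to a space-like vector of time 0 whose image also has time 0, shows that
   [sigma] fixes squares; with the square roots of AxEOF, [sigma] is the
   identity and [c = 1].  So [w] preserves [time^2 - dist^2]. *)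

Local Ltac rowwise := apply/rowP => ?; rewrite !mxE; ring.

Section AdditiveMorphism.
Variables (U W : zmodType) (g : U -> W).
Hypothesis gD : {morph g : u v / u + v}.

Lemma addmorph0 : g 0 = 0.
Proof. by apply: (addrI (g 0)); rewrite -gD !addr0. Qed.

Lemma addmorphN v : g (- v) = - g v.
Proof. by apply/eqP; rewrite -subr_eq0 opprK -gD addNr addmorph0. Qed.

Lemma addmorphB u v : g (u - v) = g u - g v.
Proof. by rewrite gD addmorphN. Qed.

Lemma addmorphMn v k : g (v *+ k) = g v *+ k.
Proof. by elim: k => [|k IH]; rewrite ?mulr0n ?addmorph0 // !mulrS gD IH. Qed.
End AdditiveMorphism.

Section MinkowskiForm.
Variables (R : realFieldType) (n : nat).
Local Notation V := 'rV[R]_n.+1.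

Definition mink (u v : V) : R :=
  u 0 ord0 * v 0 ord0 - \sum_(i | i != ord0) u 0 i * v 0 i.
Definition minkq (u : V) : R := mink u u.

Lemma minkC u v : mink u v = mink v u.
Proof. by rewrite /mink mulrC; congr (_ - _); apply: eq_bigr => i _; rewrite mulrC. Qed.

Lemma minkDl u v w : mink (u + v) w = mink u w + mink v w.
Proof.
rewrite /mink !mxE mulrDl.
have -> : \sum_(i | i != ord0) (u + v) 0 i * w 0 i =
   \sum_(i | i != ord0) u 0 i * w 0 i + \sum_(i | i != ord0) v 0 i * w 0 i.
  by rewrite -big_split; apply: eq_bigr => i _; rewrite !mxE mulrDl.
by ring.
Qed.

Lemma minkZl a u w : mink (a *: u) w = a * mink u w.
Proof.
rewrite /mink !mxE mulrBr mulr_sumr -mulrA; congr (_ - _).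
by apply: eq_bigr => i _; rewrite !mxE mulrA.
Qed.

Lemma minkDr u v w : mink w (u + v) = mink w u + mink w v.
Proof. by rewrite minkC minkDl !(minkC w). Qed.

Lemma minkZr a u w : mink w (a *: u) = a * mink w u.
Proof. by rewrite minkC minkZl minkC. Qed.

Lemma minkNl u w : mink (- u) w = - mink u w.
Proof. by rewrite -scaleN1r minkZl mulN1r. Qed.

Lemma minkNr u w : mink w (- u) = - mink w u.
Proof. by rewrite minkC minkNl minkC. Qed.

Lemma minkBl u v w : mink (u - v) w = mink u w - mink v w.
Proof. by rewrite minkDl minkNl. Qed.

Lemma minkBr u v w : mink w (u - v) = mink w u - mink w v.
Proof. by rewrite minkDr minkNr. Qed.

Lemma mink0l w : mink 0 w = 0.
Proof. by rewrite -(scale0r 0) minkZl mul0r. Qed.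

Lemma mink0r w : mink w 0 = 0.
Proof. by rewrite minkC mink0l. Qed.

Lemma minkq0 : minkq 0 = 0.
Proof. exact: mink0l. Qed.

Lemma minkqD u v : minkq (u + v) = minkq u + minkq v + 2 * mink u v.
Proof. rewrite /minkq minkDl !minkDr (minkC v u); ring. Qed.

Lemma minkqB u v : minkq (u - v) = minkq u + minkq v - 2 * mink u v.
Proof. rewrite /minkq minkBl !minkBr (minkC v u); ring. Qed.

Lemma minkqZ a u : minkq (a *: u) = a ^+ 2 * minkq u.
Proof. rewrite /minkq minkZl minkZr; ring. Qed.

Lemma minkqN u : minkq (- u) = minkq u.
Proof. by rewrite /minkq minkNl minkNr opprK. Qed.

Lemma minkq_comb2 a b x y :
  minkq (a *: x + b *: y) = a ^+ 2 * minkq x + b ^+ 2 * minkq y + 2 * (a * b) * mink x y.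
Proof. rewrite minkqD !minkqZ minkZl minkZr; ring. Qed.

Lemma minkq_comb3 a b c x y z : minkq (a *: x + b *: y + c *: z) =
  a ^+ 2 * minkq x + b ^+ 2 * minkq y + c ^+ 2 * minkq z + 2 * (a * b) * mink x y
  + 2 * (a * c) * mink x z + 2 * (b * c) * mink y z.
Proof. rewrite minkqD minkq_comb2 minkqZ !minkDl !minkZl !minkZr; ring. Qed.

Lemma psumr_sqr_eq0 (I : finType) (P : pred I) (f : I -> R) :
  \sum_(i | P i) f i * f i = 0 -> forall i, P i -> f i = 0.
Proof.
move=> hs i hi.
have sq_ge0 j : P j -> 0 <= f j * f j by rewrite -expr2 sqr_ge0.
have /eqP := @psumr_eq0P _ _ P (fun i => f i * f i) sq_ge0 hs i hi.
by rewrite mulf_eq0 orbb => /eqP.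
Qed.

Lemma null_time0 v : minkq v = 0 -> v 0 ord0 = 0 -> v = 0.
Proof.
move=> hv h0; have hs : \sum_(i | i != ord0) v 0 i * v 0 i = 0.
  by move: hv; rewrite /minkq /mink h0 mul0r sub0r => /eqP; rewrite oppr_eq0 => /eqP.
apply/rowP => i; rewrite mxE; case: (eqVneq i ord0) => [->//|hi].
exact: psumr_sqr_eq0 hs i hi.
Qed.

(* Equality case of Cauchy–Schwarz: with [a], [b] the time components of [v], [m],
   the spatial part of [b v - a m] has vanishing sum of squares. *)
Lemma null_orth_collinear v m : minkq v = 0 -> minkq m = 0 -> mink v m = 0 ->
  m != 0 -> exists s, v = s *: m.
Proof.
move=> hv hm hvm m0; set a : R := v 0 ord0; set b : R := m 0 ord0.
have hb : b != 0 by apply: contra m0 => /eqP hb; apply/eqP; exact: null_time0.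
have sum_eq (x y : V) : mink x y = 0 ->
    \sum_(i | i != ord0) x 0 i * y 0 i = x 0 ord0 * y 0 ord0.
  by rewrite /mink => /eqP; rewrite subr_eq0 => /eqP.
have H : \sum_(i | i != ord0) (v 0 i * b - a * m 0 i) * (v 0 i * b - a * m 0 i) = 0.
  have -> : \sum_(i | i != ord0) (v 0 i * b - a * m 0 i) * (v 0 i * b - a * m 0 i)
    = (b * b) * \sum_(i | i != ord0) v 0 i * v 0 i
      - (2 * a * b) * \sum_(i | i != ord0) v 0 i * m 0 i
      + (a * a) * \sum_(i | i != ord0) m 0 i * m 0 i.
    by rewrite !mulr_sumr -sumrB -big_split /=; apply: eq_bigr => i _; ring.
  by rewrite !sum_eq // -/a -/b; ring.
exists (a / b); apply/rowP => i; rewrite mxE.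
case: (eqVneq i ord0) => [->|hi]; first by rewrite -/a -/b mulfVK.
have /eqP := psumr_sqr_eq0 H hi; rewrite subr_eq0 => /eqP E.
by apply: (mulIf hb); rewrite E mulrAC mulfVK // mulrC.
Qed.

Lemma mink_neq0 u v : mink u v != 0 -> u != 0 /\ v != 0.
Proof. by move=> huv; split; apply: contraNneq huv => ->; rewrite ?mink0l ?mink0r. Qed.

Lemma mink_suml (I : finType) (F : I -> V) y : mink (\sum_i F i) y = \sum_i mink (F i) y.
Proof. exact: (big_morph (mink^~ y) (fun u v => minkDl u v y) (mink0l y)). Qed.

Lemma mink_sumr (I : finType) (F : I -> V) y : mink y (\sum_i F i) = \sum_i mink y (F i).
Proof. exact: (big_morph (mink y) (fun u v => minkDr u v y) (mink0r y)). Qed.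

Definition base (i : 'I_n.+1) : V := delta_mx 0 i.

Lemma baseE i j : base j 0 i = (i == j)%:R.
Proof. by rewrite mxE eqxx. Qed.

Lemma mink_base u j : mink u (base j) = if j == ord0 then u 0 ord0 else - u 0 j.
Proof.
rewrite /mink baseE; case: (eqVneq j ord0) => [->|hj].
  rewrite /= mulr1n mulr1 big1 ?subr0 // => i hi; by rewrite baseE (negbTE hi) mulr0.
rewrite /= mulr0n mulr0 sub0r (bigD1 j) //= baseE eqxx mulr1 big1 ?addr0 //.
by move=> i /andP[_ hi]; rewrite baseE (negbTE hi) mulr0.
Qed.

Lemma minkq_base0 : minkq (base ord0) = 1.
Proof. by rewrite /minkq mink_base eqxx baseE eqxx. Qed.

Lemma minkq_base i : i != ord0 -> minkq (base i) = -1.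
Proof. by move=> hi; rewrite /minkq mink_base (negbTE hi) baseE eqxx. Qed.

Lemma mink_base_orth i j : i != j -> mink (base i) (base j) = 0.
Proof.
move=> hij; rewrite mink_base baseE; case: ifP => [/eqP hj|_].
  by subst j; rewrite eq_sym (negbTE hij).
by rewrite baseE eq_sym (negbTE hij) oppr0.
Qed.

Lemma row_base_ind (P : V -> Prop) : P 0 -> (forall u v, P u -> P v -> P (u + v)) ->
  (forall a i, P (a *: base i)) -> forall v, P v.
Proof.
move=> P0 PD Pe v; rewrite (row_sum_delta v).
by apply: big_ind => // i _; apply: Pe.
Qed.

(* [ldir k 1] and [ldir k (-1)] are the two null directions in the [(t, x_k)] plane. *)
Definition ldir (k : 'I_n.+1) (a : R) : V := base ord0 + a *: base k.

Lemma mink_ldir k i a b : k != ord0 -> i != ord0 ->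
  mink (ldir k a) (ldir i b) = 1 - a * b * (i == k)%:R.
Proof.
move=> hk hi; rewrite /ldir !minkDl !minkDr !minkZl !minkZr !mink_base !baseE.
rewrite !eqxx (negbTE hi) (eq_sym ord0 k) (negbTE hk) /= mulr1n mulr0n.
ring.
Qed.

Lemma null_ldir k a : k != ord0 -> a ^+ 2 = 1 -> minkq (ldir k a) = 0.
Proof. by move=> hk ha; rewrite /minkq mink_ldir // eqxx mulr1 -expr2 ha subrr. Qed.

Lemma scale_base0_ldir k a :
  a *: base ord0 = (a / 2) *: ldir k 1 + (a / 2) *: ldir k (-1).
Proof. by apply/rowP => j; rewrite /ldir !mxE; field. Qed.

Lemma scale_base_ldir k a :
  a *: base k = (a / 2) *: ldir k 1 + (- (a / 2)) *: ldir k (-1).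
Proof. by apply/rowP => j; rewrite /ldir !mxE; field. Qed.

Lemma ldir_neq0 k a : k != ord0 -> ldir k a != 0.
Proof.
move=> hk; apply/negP => /eqP /rowP /(_ ord0).
rewrite /ldir !mxE eqxx eq_sym (negbTE hk) /= mulr0 addr0 => /eqP.
by rewrite oner_eq0.
Qed.

Definition lightlike (p q : V) : Prop := minkq (p - q) = 0.

Definition light_meet (p q z : V) : Prop := lightlike z p /\ lightlike z q.

(* A relation expressed through [lightlike] alone, hence preserved by any
   bijection preserving [lightlike]; it tells the vertices of a light-like
   parallelogram apart. *)
Definition screened (p1 q1 p2 q2 : V) : Prop :=
  exists z, light_meet p1 q1 z /\ forall y, light_meet p2 q2 y -> ~ lightlike z y.

Lemma lightlike_refl p : lightlike p p.
Proof. by rewrite /lightlike subrr minkq0. Qed.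

Lemma lightlike_add x v : lightlike (x + v) x <-> minkq v = 0.
Proof. by rewrite /lightlike addrC addKr. Qed.

Lemma light_meet_null_line X N y : minkq N = 0 -> N != 0 ->
  light_meet X (X + N) y -> exists s, y = X + s *: N.
Proof.
move=> hN N0 [h1 h2].
have orth : mink (y - X) N = 0.
  move: h2; rewrite /lightlike.
  have -> : y - (X + N) = (y - X) - N by rowwise.
  by rewrite minkqB hN h1 => E; lra.
have [s hs] := null_orth_collinear h1 hN orth N0.
by exists s; rewrite -hs addrC subrK.
Qed.

Lemma lightcone_inj p q : (forall r, lightlike r p -> lightlike r q) -> p = q.
Proof.
move=> hpq; apply/eqP/negPn/negP => neq; set v := q - p.
have [z hz hzv] : exists2 z, minkq z = 0 & minkq (z - v) != 0.
  have [hv|hv] := eqVneq (minkq v) 0; last by exists 0; rewrite ?minkq0 // sub0r minkqN.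
  have v0 : v 0 ord0 != 0.
    apply: contra neq => /eqP /(null_time0 hv) /eqP; by rewrite subr_eq0 eq_sym.
  exists ((2 * v 0 ord0) *: base ord0 - v).
    by rewrite minkqB minkqZ minkq_base0 minkZl minkC mink_base eqxx hv; ring.
  have -> : (2 * v 0 ord0) *: base ord0 - v - v = (2 * v 0 ord0) *: base ord0 + (-2) *: v.
    by rowwise.
  rewrite minkq_comb2 minkq_base0 hv minkC mink_base eqxx.
  have -> : (2 * v 0 ord0) ^+ 2 * 1 + (-2) ^+ 2 * 0 + 2 * (2 * v 0 ord0 * -2) * v 0 ord0
    = - 4 * (v 0 ord0 * v 0 ord0) by ring.
  by rewrite !mulf_neq0 // oppr_eq0 pnatr_eq0.
apply: (negP hzv); apply/eqP.
have := hpq (p + z); rewrite /lightlike addrC addKr => /(_ hz).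
by have -> : p + z - q = z - v by rewrite /v; rowwise.
Qed.

Lemma parallelogram_unscreened x n1 n2 : minkq n1 = 0 -> minkq n2 = 0 -> mink n1 n2 != 0 ->
  ~ screened (x + n2) (x + n1 + n2) x (x + n1).
Proof.
move=> h1 h2 hb [z [[hz1 hz2] H]].
have [n10 _] := mink_neq0 hb.
have hz2' : lightlike z (x + n2 + n1) by move: hz2; rewrite -addrA (addrC n1) addrA.
have [s hs] := light_meet_null_line h1 n10 (conj hz1 hz2').
apply: (H (x + s *: n1)).
  split; rewrite /lightlike.
    have -> : x + s *: n1 - x = s *: n1 by rowwise.
    by rewrite minkqZ h1 mulr0.
  have -> : x + s *: n1 - (x + n1) = (s - 1) *: n1 by rowwise.
  by rewrite minkqZ h1 mulr0.
rewrite /lightlike hs.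
by have -> : x + n2 + s *: n1 - (x + s *: n1) = n2 by rowwise.
Qed.

Section LightParallelogram.
Variables (X N1 N2 : V).
Hypotheses (h1 : minkq N1 = 0) (h2 : minkq N2 = 0) (h12 : mink N2 N1 != 0).

(* The screening point is [X + N2 + u m], with [u] chosen so that [N2 + u m] is
   orthogonal to [N1]; this keeps it off the light cone of every point of the
   line [X + R N1]. *)
Lemma oblique_screened m : minkq m = 0 -> mink m N1 != 0 -> mink N2 m != 0 ->
  screened (X + N2) (X + N2 + m) X (X + N1).
Proof.
move=> hm hmN1 hN2m; have [_ N1_neq0] := mink_neq0 h12.
set u := - mink N2 N1 / mink m N1.
have hu : mink N2 N1 + u * mink m N1 = 0 by rewrite /u; field.
have u0 : u != 0 by rewrite /u mulf_eq0 negb_or oppr_eq0 h12 invr_eq0 hmN1.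
exists (X + N2 + u *: m); split.
  split; rewrite /lightlike.
    have -> : X + N2 + u *: m - (X + N2) = u *: m by rowwise.
    by rewrite minkqZ hm mulr0.
  have -> : X + N2 + u *: m - (X + N2 + m) = (u - 1) *: m by rowwise.
  by rewrite minkqZ hm mulr0.
move=> y hy; have [s ->] := light_meet_null_line h1 N1_neq0 hy.
rewrite /lightlike.
have -> : X + N2 + u *: m - (X + s *: N1) = 1 *: N2 + u *: m + (- s) *: N1 by rowwise.
rewrite minkq_comb3 h1 h2 hm => E.
have : u * mink N2 m = 0.
  have : 2 * (u * mink N2 m) - 2 * s * (mink N2 N1 + u * mink m N1) = 0.
    by rewrite -[RHS]E; ring.
  by rewrite hu mulr0 => ?; lra.
by apply/eqP; rewrite mulf_eq0 negb_or u0.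
Qed.

Lemma unscreened_on_line B : light_meet (X + N1) (X + N2) B -> B != X ->
  ~ screened (X + N2) B X (X + N1) -> exists t, B = X + N2 + t *: N1.
Proof.
move=> [hB1 hB2] hBX unscr; have [N2_neq0 N1_neq0] := mink_neq0 h12.
set m := B - (X + N2).
have Bm : B = X + N2 + m by rewrite /m addrC subrK.
have hm : minkq m = 0 by exact: hB2.
have [hmN1|hmN1] := eqVneq (mink m N1) 0.
  by have [s hs] := null_orth_collinear hm h1 hmN1 N1_neq0; exists s; rewrite Bm hs.
have [hN2m|hN2m] := eqVneq (mink N2 m) 0; last first.
  by case: unscr; rewrite Bm; exact: oblique_screened.
have [s hs] := null_orth_collinear hm h2 (etrans (minkC _ _) hN2m) N2_neq0.
move: hB1; rewrite /lightlike.
have -> : B - (X + N1) = (1 + s) *: N2 + (-1) *: N1 by rewrite Bm hs; rowwise.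
rewrite minkq_comb2 h1 h2 => E.
have /eqP : (1 + s) * mink N2 N1 = 0 by lra.
rewrite mulf_eq0 (negbTE h12) orbF => /eqP hs1; case/eqP: hBX.
have s1 : s = -1 by lra.
by rewrite Bm hs s1; rowwise.
Qed.

End LightParallelogram.

(* A light-like parallelogram is determined by three of its vertices. *)
Lemma unscreened_parallelogram X N1 N2 B :
  minkq N1 = 0 -> minkq N2 = 0 -> mink N2 N1 != 0 ->
  light_meet (X + N1) (X + N2) B -> B != X ->
  ~ screened (X + N2) B X (X + N1) -> ~ screened (X + N1) B X (X + N2) ->
  B = X + N1 + N2.
Proof.
move=> h1 h2 h12 [hB1 hB2] hBX unscr1 unscr2.
have [t ht] := unscreened_on_line h1 h2 h12 (conj hB1 hB2) hBX unscr1.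
have h21 : mink N1 N2 != 0 by rewrite minkC.
have [t' ht'] := unscreened_on_line h2 h1 h21 (conj hB2 hB1) hBX unscr2.
have E : (t - 1) *: N1 = (t' - 1) *: N2.
  apply/rowP => i; move/rowP: (etrans (esym ht) ht') => /(_ i).
  by rewrite !mxE => ?; lra.
have : mink ((t - 1) *: N1) N2 = mink ((t' - 1) *: N2) N2 by rewrite E.
rewrite !minkZl -/(minkq N2) h2 mulr0 => /eqP.
rewrite mulf_eq0 (negbTE h21) orbF subr_eq0 => /eqP ht1.
by rewrite ht ht1; rowwise.
Qed.
End MinkowskiForm.

Arguments base {R n} i.

Definition o1 {n} : 'I_n.+3 := Ordinal (isT : (1 < n.+3)%N).
Definition o2 {n} : 'I_n.+3 := Ordinal (isT : (2 < n.+3)%N).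
Definition other_space {n} (i : 'I_n.+3) : 'I_n.+3 := if i == o1 then o2 else o1.

Lemma o1_neq0 {n} : o1 != ord0 :> 'I_n.+3. Proof. by []. Qed.
Lemma o2_neq0 {n} : o2 != ord0 :> 'I_n.+3. Proof. by []. Qed.
Lemma o1_neq_o2 {n} : o1 != o2 :> 'I_n.+3. Proof. by []. Qed.

Lemma other_space_neq0 n (i : 'I_n.+3) : other_space i != ord0.
Proof. by rewrite /other_space; case: ifP. Qed.

Lemma other_space_neq n (i : 'I_n.+3) : other_space i != i.
Proof. by rewrite /other_space; case: ifP => [/eqP->|/negbT] //; rewrite eq_sym. Qed.

Section LightconePreserving.
Variables (R : realFieldType) (n : nat).
Local Notation V := 'rV[R]_n.+3.

Variable w : V -> V.
Hypothesis w_lightlike : forall p q, lightlike p q <-> lightlike (w p) (w q).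
Hypothesis w_surj : forall y, exists x, w x = y.
Hypothesis w_inj : injective w.

Lemma screened_preim p1 q1 p2 q2 :
  screened (w p1) (w q1) (w p2) (w q2) -> screened p1 q1 p2 q2.
Proof.
move=> [Z [[hz1 hz2] H]]; have [z hz] := w_surj Z; subst Z.
exists z; split; first by split; apply: (w_lightlike _ _).2.
move=> y [hy1 hy2] hzy.
by apply: (H (w y)); first split; apply: (w_lightlike _ _).1.
Qed.

(* A light-like parallelogram is characterised by [lightlike] alone, so [w]
   maps it to a light-like parallelogram. *)
Lemma w_parallelogram x n1 n2 : minkq n1 = 0 -> minkq n2 = 0 -> mink n1 n2 != 0 ->
  w (x + n1 + n2) = w (x + n1) + w (x + n2) - w x.
Proof.
move=> h1 h2 h12; set X := w x.
set N1 := w (x + n1) - X; set N2 := w (x + n2) - X.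
have E1 : X + N1 = w (x + n1) by rewrite /N1 addrC subrK.
have E2 : X + N2 = w (x + n2) by rewrite /N2 addrC subrK.
have hN1 : minkq N1 = 0.
  by rewrite -(lightlike_add X) E1; apply: (w_lightlike _ _).1; apply/lightlike_add.
have hN2 : minkq N2 = 0.
  by rewrite -(lightlike_add X) E2; apply: (w_lightlike _ _).1; apply/lightlike_add.
have hN12 : mink N2 N1 != 0.
  apply/negP => /eqP hb; move/negP: h12; apply; apply/eqP.
  have : lightlike (w (x + n1)) (w (x + n2)).
    rewrite /lightlike -E1 -E2.
    have -> : X + N1 - (X + N2) = N1 - N2 by rowwise.
    by rewrite minkqB hN1 hN2 minkC hb; ring.
  move/(w_lightlike _ _).2; rewrite /lightlike.
  have -> : x + n1 - (x + n2) = n1 - n2 by rowwise.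
  by rewrite minkqB h1 h2 => ?; lra.
have -> : w (x + n1) + w (x + n2) - X = X + N1 + N2 by rewrite /N1 /N2; rowwise.
apply: unscreened_parallelogram => //.
- split; [rewrite E1 | rewrite E2]; apply: (w_lightlike _ _).1.
    exact/lightlike_add.
  by rewrite -addrA (addrC n1) addrA; apply/lightlike_add.
- apply/negP => /eqP /w_inj hx; move/negP: h12; apply; apply/eqP.
  have : minkq (n1 + n2) = 0 by rewrite -(lightlike_add x) addrA hx; exact: lightlike_refl.
  by rewrite minkqD h1 h2 => ?; lra.
- rewrite E1 E2 => /screened_preim; exact: parallelogram_unscreened.
- rewrite E1 E2 => /screened_preim.
  rewrite -addrA (addrC n1) addrA.
  by apply: parallelogram_unscreened; rewrite // minkC.
Qed.

Definition incr_invariant (nv v : V) : Prop :=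
  forall x, w (x + v + nv) - w (x + v) = w (x + nv) - w x.

Lemma incr_invariant0 nv : incr_invariant nv 0.
Proof. by move=> x; rewrite addr0. Qed.

Lemma incr_invariantD nv u v :
  incr_invariant nv u -> incr_invariant nv v -> incr_invariant nv (u + v).
Proof. by move=> hu hv x; rewrite addrA hv hu. Qed.

Lemma incr_invariant_null nv m a : minkq nv = 0 -> minkq m = 0 -> mink m nv != 0 ->
  incr_invariant nv (a *: m).
Proof.
move=> hn hm hmn; have [->|ha] := eqVneq a 0; first by rewrite scale0r; exact: incr_invariant0.
move=> x; rewrite w_parallelogram //; first by rowwise.
- by rewrite minkqZ hm mulr0.
- by rewrite minkZl mulf_neq0.
Qed.

(* Every vector is a sum of multiples of null vectors not orthogonal to [nv]. *)
Lemma incr_invariant_ldir i eps beta : i != ord0 -> eps ^+ 2 = 1 ->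
  forall v, incr_invariant (beta *: ldir i eps) v.
Proof.
move=> hi heps; set nv := beta *: ldir i eps.
have [hb0 v x|hb] := eqVneq beta 0; first by rewrite /nv hb0 scale0r !addr0 !subrr.
have hnv : minkq nv = 0 by rewrite minkqZ null_ldir // mulr0.
have oblique j a b : j != ord0 -> a ^+ 2 = 1 -> j != i ->
    incr_invariant nv (b *: ldir j a).
  move=> hj ha hji; apply: incr_invariant_null; rewrite ?null_ldir //.
  by rewrite minkZr mink_ldir // (eq_sym i j) (negbTE hji) mulr0 subr0 mulr1.
have inv0 (a : R) : incr_invariant nv (a *: base ord0).
  rewrite (scale_base0_ldir (other_space i)).
  by apply: incr_invariantD; apply: oblique;
    rewrite ?other_space_neq0 ?other_space_neq ?expr1n ?sqrrN ?expr1n.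
apply: row_base_ind; [exact: incr_invariant0 | exact: incr_invariantD | move=> a k].
have [->|hk] := eqVneq k ord0; first exact: inv0.
have [->|hki] := eqVneq k i; last first.
  by rewrite scale_base_ldir; apply: incr_invariantD; apply: oblique;
    rewrite ?sqrrN ?expr1n.
have -> : a *: base i = (eps ^+ 2 * a) *: base i by rewrite heps mul1r.
have -> : (eps ^+ 2 * a) *: base i = (eps * a) *: base ord0 + (- (eps * a)) *: ldir i (- eps).
  by rewrite /ldir; rowwise.
apply: incr_invariantD; first exact: inv0.
apply: incr_invariant_null; rewrite ?null_ldir ?sqrrN //.
rewrite minkZr mink_ldir // eqxx mulr1 mulNr -expr2 heps opprK mulf_neq0 //.
by rewrite -mulr2n pnatr_eq0.
Qed.

Definition incr_const (v : V) : Prop := forall x, w (x + v) - w x = w v - w 0.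

Lemma incr_constD u v : incr_const u -> incr_const v -> incr_const (u + v).
Proof.
move=> hu hv x; have h1 := hv (x + u); have h2 := hu x; have h3 := hv u.
rewrite addrA; apply/rowP => i.
move/rowP: h1 => /(_ i); move/rowP: h2 => /(_ i); move/rowP: h3 => /(_ i).
by rewrite !mxE => *; lra.
Qed.

Lemma incr_constT v : incr_const v.
Proof.
have const_ldir i eps beta : i != ord0 -> eps ^+ 2 = 1 -> incr_const (beta *: ldir i eps).
  by move=> hi he x; have := incr_invariant_ldir beta hi he x 0; rewrite !add0r.
apply: row_base_ind v; first by move=> x; rewrite addr0 !subrr.
  exact: incr_constD.
move=> a k; have [->|hk] := eqVneq k ord0.
  by rewrite (scale_base0_ldir o1); apply: incr_constD; apply: const_ldir;
    rewrite ?sqrrN ?expr1n.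
by rewrite scale_base_ldir; apply: incr_constD; apply: const_ldir;
  rewrite ?sqrrN ?expr1n.
Qed.

Definition lin (v : V) : V := w v - w 0.

Lemma w_sub p q : w p - w q = lin (p - q).
Proof. by have := incr_constT (p - q) q; rewrite [q + _]addrC subrK. Qed.

Lemma linD : {morph lin : u v / u + v}.
Proof.
move=> u v; have h := incr_constT v u; rewrite /lin; apply/rowP => i.
by move/rowP: h => /(_ i); rewrite !mxE => *; lra.
Qed.

Lemma lin_null v : minkq v = 0 <-> minkq (lin v) = 0.
Proof. by have := w_lightlike v 0; rewrite /lightlike subr0. Qed.

Lemma lin_inj : injective lin.
Proof. by move=> u v; rewrite /lin => /(congr1 (fun x => x + w 0)); rewrite !subrK => /w_inj. Qed.

Lemma lin_surj y : exists v, lin v = y.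
Proof. by have [v hv] := w_surj (y + w 0); exists v; rewrite /lin hv addrK. Qed.
End LightconePreserving.


Section AdditiveNullPreserving.
Variables (R : realFieldType) (n : nat).
Local Notation V := 'rV[R]_n.+3.

Variable f : V -> V.
Hypothesis fD : {morph f : u v / u + v}.
Hypothesis f_null : forall v, minkq v = 0 <-> minkq (f v) = 0.
Hypothesis f_inj : injective f.
Hypothesis f_surj : forall y, exists x, f x = y.


Definition img (i : 'I_n.+3) : V := f (base i).
Definition conf : R := minkq (img ord0).

Lemma conf_neq0 : conf != 0.
Proof. by apply/eqP => /(f_null (base ord0)).2; rewrite minkq_base0 => /eqP; rewrite oner_eq0. Qed.

Lemma f_ldir i : f (ldir i 1) = img ord0 + img i /\ f (ldir i (-1)) = img ord0 - img i.
Proof. by rewrite /ldir scale1r scaleN1r fD (addmorphB fD). Qed.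

Lemma img_gram0 i : i != ord0 -> mink (img ord0) (img i) = 0 /\ minkq (img i) = - conf.
Proof.
move=> hi; have [h1 h2] := f_ldir i.
have /(f_null _).1 : minkq (ldir i (1 : R)) = 0 by rewrite null_ldir ?expr1n.
have /(f_null _).1 : minkq (ldir i (-1 : R)) = 0 by rewrite null_ldir ?sqrrN ?expr1n.
by rewrite h1 h2 minkqB minkqD -/conf => ? ?; split; lra.
Qed.

(* [5 e_0 + 3 e_i + 4 e_j] is null since [3^2 + 4^2 = 5^2]. *)
Lemma img_gram_space i j : i != ord0 -> j != ord0 -> i != j -> mink (img i) (img j) = 0.
Proof.
move=> hi hj hij.
have v_null : minkq (5%:R *: base ord0 + 3%:R *: base i + 4%:R *: base j : V) = 0.
  have [h0i h0j] : ord0 != i /\ ord0 != j by rewrite !(eq_sym ord0).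
  rewrite minkq_comb3 minkq_base0 !minkq_base // !mink_base_orth //; ring.
move/(f_null _).1: v_null.
rewrite !fD !scaler_nat !(addmorphMn fD) -!scaler_nat -/(img ord0) -/(img i) -/(img j).
have [g1 q1] := img_gram0 hi; have [g2 q2] := img_gram0 hj.
rewrite minkq_comb3 -/conf q1 q2 g1 g2 => H.
have /eqP : 24%:R * mink (img i) (img j) = 0 by rewrite -[RHS]H; ring.
by rewrite mulf_eq0 pnatr_eq0 => /eqP.
Qed.

Lemma img_gram i j : mink (img i) (img j) = conf * mink (base i) (base j).
Proof.
have [->|hi] := eqVneq i ord0; have [->|hj] := eqVneq j ord0.
- by rewrite -/(minkq _) -/conf -/(minkq _) minkq_base0 mulr1.
- by rewrite (img_gram0 hj).1 mink_base_orth 1?eq_sym // mulr0.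
- by rewrite minkC (img_gram0 hi).1 mink_base_orth // mulr0.
have [<-|hij] := eqVneq i j.
  by rewrite -/(minkq _) (img_gram0 hi).2 -/(minkq _) minkq_base // mulrN1.
by rewrite img_gram_space // mink_base_orth // mulr0.
Qed.

Lemma f_null_line m x : minkq m = 0 -> m != 0 -> exists s, f (x *: m) = s *: f m.
Proof.
move=> hm m0.
have h1 : minkq (f (x *: m)) = 0 by apply: (f_null _).1; rewrite minkqZ hm mulr0.
have h2 : minkq (f m) = 0 by apply: (f_null _).1.
have h12 : mink (f (x *: m)) (f m) = 0.
  have : minkq (f (x *: m) - f m) = 0.
    rewrite -(addmorphB fD) -[X in _ - X]scale1r -scalerBl.
    by apply: (f_null _).1; rewrite minkqZ hm mulr0.
  by rewrite minkqB h1 h2 => ?; lra.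
have fm0 : f m != 0 by apply: contra m0 => /eqP fm0; apply/eqP/f_inj; rewrite fm0 (addmorph0 fD).
exact: null_orth_collinear h1 h2 h12 fm0.
Qed.

(* Split [x e_0] and [x e_i] along the null vectors [e_0 +- e_i] and compare
   with the splitting of [x e_0] along [e_0 +- e_j]. *)
Lemma f_scale_pair x i : i != ord0 ->
  exists s, f (x *: base ord0) = s *: img ord0 /\ f (x *: base i) = s *: img i.
Proof.
move=> hi; set j := other_space i.
have [hj hji] : j != ord0 /\ j != i by rewrite other_space_neq0 other_space_neq.
have split_ldir k : k != ord0 -> exists s t,
    f (x *: base ord0) = s *: (img ord0 + img k) + t *: (img ord0 - img k) /\
    f (x *: base k) = s *: (img ord0 + img k) - t *: (img ord0 - img k).
  move=> hk; have [h1 h2] := f_ldir k.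
  have [s hs] := f_null_line (x / 2) (null_ldir hk (expr1n _ 2)) (ldir_neq0 1 hk).
  have [t ht] := f_null_line (x / 2) (null_ldir hk (etrans (sqrrN 1) (expr1n _ 2)))
    (ldir_neq0 (-1) hk).
  exists s, t; rewrite (scale_base0_ldir k) (scale_base_ldir k) scaleNr.
  by rewrite !fD (addmorphN fD) hs ht h1 h2.
have [s [t [hI hIi]]] := split_ldir i hi.
have [s' [t' [hJ _]]] := split_ldir j hj.
have [g0i qi] := img_gram0 hi; have [g0j _] := img_gram0 hj.
have gji : mink (img j) (img i) = 0 by apply: img_gram_space.
have ts : t = s.
  have := congr1 (fun v => mink v (img i)) (etrans (esym hI) hJ).
  rewrite /= !(minkBl, minkDl, minkNl, minkZl) -/(minkq (img i)) qi g0i gji => E.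
  have /eqP : (t - s) * conf = 0 by lra.
  by rewrite mulf_eq0 (negbTE conf_neq0) orbF subr_eq0 => /eqP.
by exists (2 * s); rewrite hI hIi ts; split; rowwise.
Qed.

Definition sigma (x : R) : R := mink (f (x *: base ord0)) (img ord0) / conf.

Lemma f_scale_base x i : f (x *: base i) = sigma x *: img i.
Proof.
have sigma_eq s : f (x *: base ord0) = s *: img ord0 -> sigma x = s.
  by move=> h0; rewrite /sigma h0 minkZl -/conf mulfK // conf_neq0.
have [->|i0] := eqVneq i ord0.
  by have [s [h0 _]] := f_scale_pair x o1_neq0; rewrite h0 (sigma_eq s).
by have [s [h0 ->]] := f_scale_pair x i0; rewrite (sigma_eq s).
Qed.

Lemma sigmaD : {morph sigma : a b / a + b}.
Proof. by move=> a b; rewrite /sigma scalerDl fD minkDl mulrDl. Qed.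

Lemma sigma0 : sigma 0 = 0.
Proof. by rewrite /sigma scale0r (addmorph0 fD) mink0l mul0r. Qed.

Lemma sigmaN a : sigma (- a) = - sigma a.
Proof. by apply/eqP; rewrite -subr_eq0 opprK -sigmaD addNr sigma0. Qed.

Lemma sigma1 : sigma 1 = 1.
Proof. by rewrite /sigma scale1r -/(img _) -/(minkq _) -/conf divff // conf_neq0. Qed.

Lemma sigma_sum (I : finType) (P : pred I) (F : I -> R) :
  sigma (\sum_(i | P i) F i) = \sum_(i | P i) sigma (F i).
Proof. exact: (big_morph sigma sigmaD sigma0). Qed.

(* [(x^2 + 1, x^2 - 1, 2x, 0, ...)] is null. *)
Lemma sigma_sqr x : sigma (x * x) = sigma x * sigma x.
Proof.
have /(f_null _).1 :
    minkq ((x * x + 1) *: base ord0 + (x * x - 1) *: base o1 + (2 * x) *: base o2 : V) = 0.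
  by rewrite minkq_comb3 minkq_base0 !minkq_base ?o1_neq0 ?o2_neq0 // !mink_base_orth
    ?o1_neq_o2 //; ring.
rewrite !fD !f_scale_base minkq_comb3.
have [g1 q1] := img_gram0 o1_neq0; have [g2 q2] := img_gram0 o2_neq0.
rewrite q1 q2 g1 g2 img_gram_space ?o1_neq0 ?o2_neq0 ?o1_neq_o2 // -/conf !sigmaD sigmaN sigma1.
have -> : sigma (2 * x) = 2 * sigma x by rewrite mulr2n !mulrDl !mul1r sigmaD.
move=> H; have : conf * (sigma (x * x) - sigma x * sigma x) = 0 by lra.
by move/eqP; rewrite mulf_eq0 (negbTE conf_neq0) /= subr_eq0 => /eqP.
Qed.

Lemma sigmaM : {morph sigma : a b / a * b}.
Proof.
move=> a b; have h := sigma_sqr (a + b).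
rewrite mulrDl !mulrDr !sigmaD !sigma_sqr (mulrC b a) in h.
have /eqP : (sigma (a * b) - sigma a * sigma b) * 2 = 0 by lra.
by rewrite mulf_eq0 pnatr_eq0 orbF subr_eq0 => /eqP.
Qed.

Lemma f_row v : f v = \sum_i sigma (v 0 i) *: img i.
Proof.
rewrite {1}(row_sum_delta v) (big_morph f fD (addmorph0 fD)).
by apply: eq_bigr => i _; rewrite f_scale_base.
Qed.

Lemma mink_f u v : mink (f u) (f v) = conf * mink (map_mx sigma u) (map_mx sigma v).
Proof.
rewrite !f_row (row_sum_delta (map_mx sigma u)) (row_sum_delta (map_mx sigma v)).
rewrite !mink_suml mulr_sumr; apply: eq_bigr => i _.
rewrite !mink_sumr mulr_sumr; apply: eq_bigr => j _.
by rewrite !minkZl !minkZr img_gram !mxE -/(base i) -/(base j); ring.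
Qed.

Lemma minkq_f v : minkq (f v) = conf * sigma (minkq v).
Proof.
rewrite /minkq mink_f; congr (_ * _).
rewrite /mink sigmaD sigmaN sigmaM sigma_sum !mxE; congr (_ - _).
by apply: eq_bigr => i _; rewrite !mxE sigmaM.
Qed.

Lemma sigma_surj r : exists y, sigma y = r.
Proof.
have [v hv] := f_surj (r *: img o1); exists (v 0 o1).
have := mink_f v (base o1).
have map_base : map_mx sigma (base o1 : V) = base o1.
  by apply/rowP => k; rewrite !mxE; case: (k == o1); rewrite /= ?mulr1n ?mulr0n ?sigma1 ?sigma0.
rewrite hv -/(img o1) map_base mink_base /= minkZl -/(minkq _) (img_gram0 o1_neq0).2.
rewrite mxE => H; have : conf * (sigma (v 0 o1) - r) = 0 by lra.
by move/eqP; rewrite mulf_eq0 (negbTE conf_neq0) /= subr_eq0 => /eqP.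
Qed.

Lemma spacelike_time0_witness : exists u : V,
  [/\ u 0 ord0 = 0, forall k, f (k *: u) 0 ord0 = 0 & minkq u != 0].
Proof.
have [t2|t2] := eqVneq (img o2 0 ord0) 0.
  exists (base o2); split; first by rewrite baseE.
    by move=> k; rewrite f_scale_base mxE t2 mulr0.
  by rewrite minkq_base // oppr_eq0 oner_eq0.
have [y hy] := sigma_surj (- img o1 0 ord0 / img o2 0 ord0).
exists (base o1 + y *: base o2); split.
- by rewrite !mxE /= !mulr0n mulr0 addr0.
- move=> k; rewrite scalerDr scalerA fD !f_scale_base sigmaM hy !mxE.
  by field.
- rewrite -[base o1]scale1r minkq_comb2 !minkq_base // mink_base_orth //.
  by apply/eqP => H; have := sqr_ge0 y; lra.
Qed.

Section Calibration.
Hypothesis f_simdist :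
  forall v : V, v 0 ord0 = 0 -> f v 0 ord0 = 0 -> minkq (f v) = minkq v.
Hypothesis eof : AxEOF R.

Lemma calibration : exists2 c : R, c != 0 & forall k, conf * sigma (k * k * c) = k * k * c.
Proof.
have [u [u_t fu_t hu]] := spacelike_time0_witness.
exists (minkq u) => // k.
by rewrite -expr2 -minkqZ -minkq_f f_simdist ?fu_t // mxE u_t mulr0.
Qed.

Lemma sigma_sqr_id k : sigma (k * k) = k * k.
Proof.
have [c c0 calib] := calibration.
have := calib k; rewrite sigmaM mulrCA.
have := calib 1; rewrite !mul1r => ->.
by move/mulIf; apply.
Qed.

Lemma sigma_id x : sigma x = x.
Proof.
have [x_pos|x_neg|->] := ltrgt0P x; last exact: sigma0.
  by have [y <-] := eof x_pos; rewrite sigma_sqr_id.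
have [y hy] : exists y, y * y = - x by apply: eof; rewrite oppr_gt0.
by apply: oppr_inj; rewrite -sigmaN -hy sigma_sqr_id.
Qed.

Lemma conf1 : conf = 1.
Proof.
have [c c0 calib] := calibration.
have := calib 1; rewrite !mul1r sigma_id => /eqP.
by rewrite -[X in _ == X]mul1r (inj_eq (mulIf c0)) => /eqP.
Qed.

Lemma minkq_f_id v : minkq (f v) = minkq v.
Proof. by rewrite minkq_f conf1 sigma_id mul1r. Qed.
End Calibration.
End AdditiveNullPreserving.

Section LightconeIsometry.
Variables (R : realFieldType) (n : nat) (w : 'rV[R]_n.+3 -> 'rV[R]_n.+3).
Hypothesis w_lightlike : forall p q, lightlike p q <-> lightlike (w p) (w q).
Hypothesis w_surj : forall y, exists x, w x = y.
Hypothesis w_inj : injective w.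
Hypothesis w_simdist : forall p q : 'rV[R]_n.+3, p 0 ord0 = q 0 ord0 -> w p 0 ord0 = w q 0 ord0 ->
  minkq (w p - w q) = minkq (p - q).
Hypothesis eof : AxEOF R.

Lemma lightcone_simdist_isometry p q : minkq (w p - w q) = minkq (p - q).
Proof.
rewrite (w_sub w_lightlike w_surj w_inj).
apply: (minkq_f_id (linD w_lightlike w_surj w_inj) (lin_null w_lightlike)
  (lin_inj w_inj) (lin_surj w_surj) _ eof) => v v_t lin_t.
have := w_simdist (p := v) (q := 0); rewrite subr0 -/(lin w v); apply.
  by rewrite v_t mxE.
by move: lin_t; rewrite /lin !mxE => /eqP; rewrite subr_eq0 => /eqP.
Qed.
End LightconeIsometry.

Section Coordinates.
Variables (R : realFieldType) (n : nat).
Local Notation V := 'rV[R]_n.+1.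
Hypothesis eof : AxEOF R.

Lemma tcompE (p : V) : tcomp p = p 0 ord0.
Proof. by rewrite /tcomp (big_pred1 ord0). Qed.

Lemma esqrtP (x : R) : 0 <= x -> 0 <= esqrt x /\ esqrt x * esqrt x = x.
Proof.
move=> hx; apply: (epsilon_spec (inhabits 0) (fun y : R => 0 <= y /\ y * y = x)).
have [x_pos|x_neg|->] := ltrgt0P x.
- by have [y hy] := eof x_pos; exists `|y|; rewrite -normrM hy ger0_norm.
- by move: hx; rewrite leNgt x_neg.
- by exists 0; rewrite mul0r.
Qed.

Lemma sdist_sqr (p q : V) :
  sdist p q ^+ 2 = \sum_(i | i != ord0) (p - q) 0 i * (p - q) 0 i.
Proof.
have sum_ge0 : 0 <= \sum_(i < n.+1 | val i != 0%N) (p 0 i - q 0 i) ^+ 2.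
  by apply: sumr_ge0 => i _; rewrite sqr_ge0.
rewrite /sdist expr2 (esqrtP sum_ge0).2.
by apply: eq_bigr => i _; rewrite !mxE expr2.
Qed.

Lemma interval_minkq (p q : V) : tdist p q ^+ 2 - sdist p q ^+ 2 = minkq (p - q).
Proof.
rewrite sdist_sqr /tdist !tcompE real_normK ?num_real // /minkq /mink !mxE expr2.
by congr (_ - _); apply: eq_bigr => i _; rewrite !mxE.
Qed.

Lemma sdist_eq_tdist (p q : V) : sdist p q = tdist p q <-> lightlike p q.
Proof.
rewrite /lightlike -interval_minkq; split => [->|H]; first by rewrite subrr.
have hs : 0 <= sdist p q.
  by rewrite /sdist; apply: (esqrtP _).1; apply: sumr_ge0 => i _; rewrite sqr_ge0.
apply/eqP; rewrite -(eqrXn2 (isT : (0 < 2)%N) hs (normr_ge0 _)) eq_sym -subr_eq0.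
exact/eqP.
Qed.
End Coordinates.

Section Worldview.
Variables (R : realFieldType) (n : nat) (B : Type)
  (Ob IOb Ph : B -> Prop) (W : B -> B -> 'rV[R]_n.+1 -> Prop).
Local Notation V := 'rV[R]_n.+1.
Hypothesis SR : SpecRel Ob IOb Ph W.

Lemma SpecRel_eof : AxEOF R.
Proof. by case: SR. Qed.

Lemma lightlike_photon m : IOb m -> forall p q : V,
  lightlike p q <-> exists b, [/\ Ph b, W m b p & W m b q].
Proof.
move=> hm p q; rewrite -(sdist_eq_tdist SpecRel_eof).
by case: SR => _ _ _ ph _; exact: ph.
Qed.

Lemma Cd_total m : IOb m -> forall p : V, Cd W m p.
Proof.
move=> hm p; have [b [_ hb _]] := (lightlike_photon hm p p).1 (lightlike_refl p).
by exists b.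
Qed.

(* An event determines its coordinates: the photons through it determine its light cone. *)
Lemma ev_inj m : IOb m -> forall p q : V, ev W m p = ev W m q -> p = q.
Proof.
move=> hm p q hpq; apply: lightcone_inj => r /(lightlike_photon hm) [b [hb hr hp]].
apply/(lightlike_photon hm); exists b; split => //.
by have := congr1 (fun e => e b) hpq; rewrite /ev => <-.
Qed.

Lemma IsCrd_ev m : IOb m -> forall p : V, IsCrd W m (ev W m p) p.
Proof. by move=> hm p; split => [||q _ /(ev_inj hm)]; first exact: Cd_total. Qed.

Section TwoObservers.
Variables m k : B.
Hypotheses (hm : IOb m) (hk : IOb k).

Definition wvt (p : V) : V := epsilon (inhabits 0) (fun q => ev W k q = ev W m p).

Lemma wvtP (p : V) : ev W k (wvt p) = ev W m p.
Proof.
apply: (epsilon_spec (inhabits 0) (fun q : V => ev W k q = ev W m p)).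
case: SR => _ _ _ _ [hev _].
have : InEv W m (ev W m p) by exists p; first exact: Cd_total.
by case/(hev m k hm hk) => q _ hq; exists q.
Qed.

Lemma wvt_inj : injective wvt.
Proof. by move=> p q h; apply: (ev_inj hm); rewrite -!wvtP h. Qed.

Lemma wvt_surj (y : V) : exists x, wvt x = y.
Proof.
case: SR => _ _ _ _ [hev _].
have : InEv W k (ev W k y) by exists y; first exact: Cd_total.
case/(hev m k hm hk) => p _ hp; exists p.
by apply: (ev_inj hk); rewrite wvtP.
Qed.

Lemma wvt_lightlike (p q : V) : lightlike p q <-> lightlike (wvt p) (wvt q).
Proof.
have W_wvt b x : W m b x <-> W k b (wvt x).
  by have := congr1 (fun e => e b) (wvtP x); rewrite /ev => ->.
split => [/(lightlike_photon hm) | /(lightlike_photon hk)] [b [hb h1 h2]].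
  by apply/(lightlike_photon hk); exists b; split => //; apply/W_wvt.
by apply/(lightlike_photon hm); exists b; split => //; apply/W_wvt.
Qed.

Lemma IsCrd_wvt (p : V) : IsCrd W k (ev W m p) (wvt p).
Proof. by rewrite -wvtP; exact: IsCrd_ev. Qed.

Lemma wvt_simdist (p q : V) : p 0 ord0 = q 0 ord0 -> wvt p 0 ord0 = wvt q 0 ord0 ->
  minkq (wvt p - wvt q) = minkq (p - q).
Proof.
move=> hpq hwpq; case: SR => _ _ _ _ [_ hsd].
have hd := hsd m k hm hk _ _ (ex_intro2 _ _ p (Cd_total hm p) erefl)
  (ex_intro2 _ _ q (Cd_total hm q) erefl) _ _ _ _
  (IsCrd_ev hm p) (IsCrd_ev hm q) (IsCrd_wvt p) (IsCrd_wvt q).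
rewrite !tcompE in hd; have {}hd := hd hpq hwpq.
rewrite -!(interval_minkq SpecRel_eof) hd /tdist !tcompE hpq hwpq.
by rewrite !subrr normr0.
Qed.
End TwoObservers.
End Worldview.

Theorem mainTheorem1 (R : realFieldType) (d : nat) (B : Type)
  (Ob IOb Ph : B -> Prop) (W : B -> B -> 'rV[R]_d -> Prop) :
  (3 <= d)%N -> SpecRel Ob IOb Ph W ->
  forall m k : B, IOb m -> IOb k ->
  forall e1 e2 : B -> Prop, InEv W m e1 -> InEv W m e2 ->
  exists p1 p2 q1 q2 : 'rV[R]_d,
    [/\ IsCrd W m e1 p1, IsCrd W m e2 p2, IsCrd W k e1 q1, IsCrd W k e2 q2 &
      tdist p1 p2 ^+ 2 - sdist p1 p2 ^+ 2 = tdist q1 q2 ^+ 2 - sdist q1 q2 ^+ 2].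
Proof.
case: d W => [|[|[|n]]] W //= _ SR m k hm hk e1 e2 [p1 _ <-] [p2 _ <-].
have eof := SpecRel_eof SR.
exists p1, p2, (wvt W m k p1), (wvt W m k p2); split.
- exact: (IsCrd_ev SR hm p1).
- exact: (IsCrd_ev SR hm p2).
- exact: (IsCrd_wvt SR hm hk p1).
- exact: (IsCrd_wvt SR hm hk p2).
rewrite !(interval_minkq eof) lightcone_simdist_isometry //.
- exact: (wvt_lightlike SR hm hk).
- exact: (wvt_surj SR hm hk).
- exact: (wvt_inj SR hm hk).
- exact: (wvt_simdist SR hm hk).
Qed.
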